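(* Let $T\ge1$ be an integer and assume $\psi_{A,a}>\psi_{A,b}$ and $\psi_{B,b}>\psi_{B,a}$. Then the point $(\theta_{A,a},\theta_{B,a})=(0,1)$ (i.e., $\theta_{A,b}=1$ and $\theta_{B,a}=1$: every user of each group is initially shown the article of the other group) is not a maximizer of $$J(\theta_{A,a},\theta_{B,a})=\sum_{t=1}^T\sum_{g\in\{A,B\}}\sum_{s\in\{a,b\}} l_{g,s}(t,\theta)$$ over $[0,1]^2$, where $\theta_{A,b}=1-\theta_{A,a}$ and $\theta_{B,b}=1-\theta_{B,a}$.
   Context: Groups are $g\in\{A,B\}$; for a group $g$, $g'$ denotes the other group. Articles are $s\in\{a,b\}$. Parameters: $\pi_A=\pi\in(0,1)$, $\pi_B=1-\pi$; $q_A,q_B\in(\tfrac12,1)$; for each $g,s$ a real number $\psi_{g,s}\in(0,1)$. For fixed $s$, given $\theta_{A,s},\theta_{B,s}\in[0,1]$, the mass function is defined recursively for both groups by $l_{g,s}(1,\theta)=\pi_g\theta_{g,s}\psi_{g,s}$ and $l_{g,s}(t+1,\theta)=\psi_{g,s}\big(q_g l_{g,s}(t,\theta)+(1-q_{g'})l_{g',s}(t,\theta)\big)$ for $t\ge1$. *)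

From Stdlib Require Import Reals.
Open Scope R_scope.

Inductive group := GA | GB.
Inductive article := Sa | Sb.

Definition other (g : group) : group := match g with GA => GB | GB => GA end.

Definition pig (pi : R) (g : group) : R := match g with GA => pi | GB => 1 - pi end.

(* l_{g,s}(t, theta); defined for t >= 1 (value at t = 0 is an unused dummy 0). *)
Fixpoint lmass (pi : R) (q : group -> R) (psi th : group -> article -> R)
    (s : article) (t : nat) (g : group) {struct t} : R :=
  match t with
  | O => 0
  | S O => pig pi g * th g s * psi g s
  | S ((S _) as t') =>
      psi g s * (q g * lmass pi q psi th s t' g
                 + (1 - q (other g)) * lmass pi q psi th s t' (other g))
  end.

Definition theta_of (x y : R) (g : group) (s : article) : R :=
  match g, s with
  | GA, Sa => x | GA, Sb => 1 - x
  | GB, Sa => y | GB, Sb => 1 - y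
  end.

Definition stage (pi : R) (q : group -> R) (psi th : group -> article -> R) (t : nat) : R :=
  lmass pi q psi th Sa t GA + lmass pi q psi th Sb t GA
  + lmass pi q psi th Sa t GB + lmass pi q psi th Sb t GB.

Fixpoint sumT (f : nat -> R) (T : nat) : R :=
  match T with O => 0 | S T' => sumT f T' + f (S T') end.

Definition J (pi : R) (q : group -> R) (psi : group -> article -> R) (T : nat) (x y : R) : R :=
  sumT (stage pi q psi (theta_of x y)) T.

(* The objective is affine in (θ_{A,a}, θ_{B,a}): the masses evolve linearly
   and, by first-step analysis, the total mass over T periods started from an
   initial mass p_g in group g on article s equals Σ_g p_g V_s(T, g), where
   V_s satisfies V(t+1, g) = ψ_{g,s} (1 + q_g V(t, g) + (1 - q_g) V(t, g')).
   Hence (0,1) can only be a maximizer if V_a(A) ≤ V_b(A) (compare with (1,1))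
   and V_b(B) ≤ V_a(B) (compare with (0,0)).  But the gap V(A) - V(B) is
   strictly increasing in ψ_A and strictly decreasing in ψ_B, so passing from
   the rates of article b to those of article a strictly increases it:
   V_a(A) - V_a(B) > V_b(A) - V_b(B), a contradiction. *)
From Stdlib Require Import Reals Lra Lia Psatz.
Open Scope R_scope.

Lemma other_involutive (g : group) : other (other g) = g.
Proof. now destruct g. Qed.

Lemma sumT_ext (f h : nat -> R) (T : nat) :
  (forall t, (1 <= t <= T)%nat -> f t = h t) -> sumT f T = sumT h T.
Proof.
  induction T as [|T IH]; intro Hfh; simpl; [reflexivity|].
  rewrite Hfh by lia. rewrite IH by (intros; apply Hfh; lia). reflexivity.
Qed.

Lemma sumT_Sn (f : nat -> R) (T : nat) :
  sumT f (S T) = f 1%nat + sumT (fun t => f (S t)) T.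
Proof. induction T as [|T IH]; simpl in *; [ring|]. rewrite IH. ring. Qed.

Lemma sumT_add (f h : nat -> R) (T : nat) :
  sumT (fun t => f t + h t) T = sumT f T + sumT h T.
Proof. induction T as [|T IH]; simpl; [ring|]. rewrite IH. ring. Qed.

(* [mass q r p t] is l_{·,s}(t) for the rates r = ψ_{·,s} and an arbitrary
   initial mass p (p_g = π_g θ_{g,s} in the paper). *)
Fixpoint mass (q r p : group -> R) (t : nat) (g : group) : R :=
  match t with
  | O => 0
  | S O => p g * r g
  | S ((S _) as t') =>
      r g * (q g * mass q r p t' g + (1 - q (other g)) * mass q r p t' (other g))
  end.

Definition transfer (q r p : group -> R) (g : group) : R :=
  q g * (p g * r g) + (1 - q (other g)) * (p (other g) * r (other g)).

Fixpoint value (q r : group -> R) (t : nat) (g : group) : R :=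
  match t with
  | O => 0
  | S t => r g * (1 + q g * value q r t g + (1 - q g) * value q r t (other g))
  end.

Lemma lmass_SS pi q psi th s t g :
  lmass pi q psi th s (S (S t)) g
  = psi g s * (q g * lmass pi q psi th s (S t) g
               + (1 - q (other g)) * lmass pi q psi th s (S t) (other g)).
Proof. reflexivity. Qed.

Lemma mass_SS q r p t g :
  mass q r p (S (S t)) g
  = r g * (q g * mass q r p (S t) g + (1 - q (other g)) * mass q r p (S t) (other g)).
Proof. reflexivity. Qed.

Lemma lmass_mass pi q psi th s t g :
  lmass pi q psi th s t g = mass q (fun h => psi h s) (fun h => pig pi h * th h s) t g.
Proof.
  revert g; induction t as [|[|t] IH]; intro g; try reflexivity.
  now rewrite lmass_SS, mass_SS, !IH.
Qed.

Lemma mass_transfer q r p k g :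
  (1 <= k)%nat -> mass q r p (S k) g = mass q r (transfer q r p) k g.
Proof.
  revert g; induction k as [|[|k] IH]; intros g Hk; [lia| |].
  - unfold transfer; destruct g; simpl; ring.
  - rewrite (mass_SS q r p (S k)), (mass_SS q r (transfer q r p) k), !IH by lia.
    reflexivity.
Qed.

Lemma sumT_mass q r T : forall p,
  sumT (fun t => mass q r p t GA + mass q r p t GB) T
  = p GA * value q r T GA + p GB * value q r T GB.
Proof.
  induction T as [|T IH]; intro p; [simpl; ring|].
  rewrite sumT_Sn.
  rewrite (sumT_ext _ (fun t => mass q r (transfer q r p) t GA
                                + mass q r (transfer q r p) t GB)).
  - rewrite IH. unfold transfer; simpl. ring.
  - intros t Ht. rewrite !mass_transfer by lia. reflexivity.
Qed.

Lemma J_value pi q psi T x y :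
  J pi q psi T x y =
    pi * x * value q (fun h => psi h Sa) T GA
  + (1 - pi) * y * value q (fun h => psi h Sa) T GB
  + pi * (1 - x) * value q (fun h => psi h Sb) T GA
  + (1 - pi) * (1 - y) * value q (fun h => psi h Sb) T GB.
Proof.
  unfold J, stage.
  set (p s h := pig pi h * theta_of x y h s).
  rewrite (sumT_ext _ (fun t =>
     (mass q (fun h => psi h Sa) (p Sa) t GA + mass q (fun h => psi h Sa) (p Sa) t GB)
   + (mass q (fun h => psi h Sb) (p Sb) t GA + mass q (fun h => psi h Sb) (p Sb) t GB))).
  - rewrite sumT_add, !sumT_mass. unfold p; simpl. ring.
  - intros t _. rewrite !lmass_mass. unfold p. ring.
Qed.

Lemma value_increment q r t h :
  value q r (S (S t)) h - value q r (S t) h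
  = r h * (q h * (value q r (S t) h - value q r t h)
           + (1 - q h) * (value q r (S t) (other h) - value q r t (other h))).
Proof. simpl. ring. Qed.

Lemma value_diff_succ q r1 r2 t h :
  value q r1 (S t) h - value q r2 (S t) h
  = (r1 h - r2 h) * (1 + q h * value q r1 t h + (1 - q h) * value q r1 t (other h))
    + r2 h * (q h * (value q r1 t h - value q r2 t h)
              + (1 - q h) * (value q r1 t (other h) - value q r2 t (other h))).
Proof. simpl. ring. Qed.

Lemma damped_average_le (r a x y : R) :
  0 <= r -> 0 <= a <= 1 -> x <= y -> r * (a * x + (1 - a) * y) <= r * y.
Proof. intros. apply Rmult_le_compat_l; nra. Qed.

Section ValueGap.

Variable q : group -> R.
Hypothesis q_prob : forall h, 0 <= q h <= 1.

Lemma value_nonneg_incr r :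
  (forall h, 0 <= r h) -> forall t h, 0 <= value q r t h <= value q r (S t) h.
Proof.
  intros r_ge0 t; induction t as [|t IH]; intro h.
  - pose proof (r_ge0 h); pose proof (q_prob h). simpl. nra.
  - pose proof (r_ge0 h); pose proof (q_prob h); pose proof (IH h); pose proof (IH (other h)).
    assert (0 <= r h * (q h * (value q r (S t) h - value q r t h)
               + (1 - q h) * (value q r (S t) (other h) - value q r t (other h))))
      by (apply Rmult_le_pos; nra).
    rewrite <- value_increment in *. lra.
Qed.

(* The difference of values for rates r2 <= r1 obeys the same kind of
   recurrence, with the extra nonnegative source (r1 - r2)(1 + Q V1). *)
Lemma value_diff_nonneg_incr r1 r2 :
  (forall h, 0 <= r2 h <= r1 h) -> forall t h,
  0 <= value q r1 t h - value q r2 t h <= value q r1 (S t) h - value q r2 (S t) h.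
Proof.
  intros r12 t; induction t as [|t IH]; intro h.
  - pose proof (r12 h); pose proof (q_prob h). simpl. nra.
  - assert (r1_ge0 : forall h, 0 <= r1 h) by (intro k; pose proof (r12 k); lra).
    pose proof (r12 h); pose proof (q_prob h); pose proof (IH h); pose proof (IH (other h)).
    pose proof (value_nonneg_incr r1 r1_ge0 t h).
    pose proof (value_nonneg_incr r1 r1_ge0 t (other h)).
    assert (0 <= (r1 h - r2 h) * (q h * (value q r1 (S t) h - value q r1 t h)
               + (1 - q h) * (value q r1 (S t) (other h) - value q r1 t (other h))))
      by (apply Rmult_le_pos; nra).
    assert (0 <= r2 h * (q h * ((value q r1 (S t) h - value q r2 (S t) h)
                                - (value q r1 t h - value q r2 t h))
               + (1 - q h) * ((value q r1 (S t) (other h) - value q r2 (S t) (other h))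
                              - (value q r1 t (other h) - value q r2 t (other h)))))
      by (apply Rmult_le_pos; nra).
    pose proof (value_diff_succ q r1 r2 (S t) h).
    pose proof (value_diff_succ q r1 r2 t h).
    lra.
Qed.

Variables (r1 r2 : group -> R) (g : group).
Hypotheses (r2_lt_r1 : 0 <= r2 g < r1 g)
           (r1_other : r1 (other g) = r2 (other g))
           (r_other_lt1 : 0 <= r1 (other g) < 1).

Let diff t h := value q r1 t h - value q r2 t h.

Lemma r2_le_r1 : forall h, 0 <= r2 h <= r1 h.
Proof. intros []; destruct g; simpl in *; lra. Qed.

(* The rate of [other g] is the same for r1 and r2, so the difference at
   [other g] has no source term: it is a damped average of the differences. *)
Lemma diff_other_succ t :
  diff (S t) (other g)
  = r1 (other g) * (q (other g) * diff t (other g) + (1 - q (other g)) * diff t g).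
Proof.
  unfold diff; rewrite value_diff_succ, other_involutive, r1_other. ring.
Qed.

Lemma diff_other_le t : diff t (other g) <= diff t g.
Proof.
  induction t as [|t IH]; [unfold diff; simpl; lra|].
  pose proof (value_diff_nonneg_incr r1 r2 r2_le_r1 t g).
  pose proof (damped_average_le (r1 (other g)) (q (other g)) _ _
                (proj1 r_other_lt1) (q_prob (other g)) IH).
  rewrite diff_other_succ. unfold diff in *. nra.
Qed.

Lemma diff_pos t : 0 < diff (S t) g.
Proof.
  assert (r1_ge0 : forall h, 0 <= r1 h) by (intro k; pose proof (r2_le_r1 k); lra).
  pose proof (q_prob g).
  pose proof (value_nonneg_incr r1 r1_ge0 t g).
  pose proof (value_nonneg_incr r1 r1_ge0 t (other g)).
  pose proof (value_diff_nonneg_incr r1 r2 r2_le_r1 t g).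
  pose proof (value_diff_nonneg_incr r1 r2 r2_le_r1 t (other g)).
  assert (0 <= (r1 g - r2 g) * (q g * value q r1 t g + (1 - q g) * value q r1 t (other g)))
    by (apply Rmult_le_pos; nra).
  assert (0 <= r2 g * (q g * (value q r1 t g - value q r2 t g)
                       + (1 - q g) * (value q r1 t (other g) - value q r2 t (other g))))
    by (apply Rmult_le_pos; nra).
  unfold diff; rewrite value_diff_succ. lra.
Qed.

Lemma value_gap_lt t :
  value q r2 (S t) g - value q r2 (S t) (other g)
  < value q r1 (S t) g - value q r1 (S t) (other g).
Proof.
  pose proof (diff_pos t).
  pose proof (value_diff_nonneg_incr r1 r2 r2_le_r1 t g).
  pose proof (damped_average_le (r1 (other g)) (q (other g)) _ _
                (proj1 r_other_lt1) (q_prob (other g)) (diff_other_le t)).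
  rewrite <- diff_other_succ in *. unfold diff in *. nra.
Qed.

End ValueGap.

Theorem corollary1 (pi : R) (q : group -> R) (psi : group -> article -> R) (T : nat) :
  0 < pi < 1 ->
  (forall g, 1/2 < q g < 1) ->
  (forall g s, 0 < psi g s < 1) ->
  (1 <= T)%nat ->
  psi GA Sa > psi GA Sb ->
  psi GB Sb > psi GB Sa ->
  ~ (forall x y, 0 <= x <= 1 -> 0 <= y <= 1 -> J pi q psi T x y <= J pi q psi T 0 1).
Proof.
  intros Hpi Hq Hpsi HT HA HB Hmax.
  destruct T as [|t]; [lia|].
  assert (q_prob : forall h, 0 <= q h <= 1) by (intro h; pose proof (Hq h); lra).
  set (ra h := psi h Sa); set (rb h := psi h Sb).
  set (rm h := match h with GA => psi GA Sb | GB => psi GB Sa end).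
  pose proof (Hpsi GA Sa); pose proof (Hpsi GA Sb);
    pose proof (Hpsi GB Sa); pose proof (Hpsi GB Sb).
  assert (gap_a : value q rm (S t) GA - value q rm (S t) GB
                  < value q ra (S t) GA - value q ra (S t) GB)
    by (apply (value_gap_lt q q_prob ra rm GA); unfold ra, rm; simpl; lra).
  assert (gap_b : value q rm (S t) GB - value q rm (S t) GA
                  < value q rb (S t) GB - value q rb (S t) GA)
    by (apply (value_gap_lt q q_prob rb rm GB); unfold rb, rm; simpl; lra).
  pose proof (Hmax 1 1 ltac:(lra) ltac:(lra)) as J11.
  pose proof (Hmax 0 0 ltac:(lra) ltac:(lra)) as J00.
  rewrite !J_value in J11, J00. fold ra rb in J11, J00.
  assert (value q ra (S t) GA <= value q rb (S t) GA) by nra.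
  assert (value q rb (S t) GB <= value q ra (S t) GB) by nra.
  lra.
Qed.
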